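(* Consider a repeater chain in the model described in the context with $M+N+1$ nodes labelled $1,\dots,M+N+1$. Suppose nodes $1,\dots,M$ are at fixed locations, with fixed distances between consecutive ones (so the lengths of edges $1,\dots,M-1$ are fixed constants). Suppose nodes $M$ and $M+N+1$ are a distance $L$ apart and the $N$ repeater nodes $M+1,\dots,M+N$ are placed along a straight line between them. Let $\ell_i\ge0$ be the distance between nodes $M+i-1$ and $M+i$ for $i=1,\dots,N+1$, with $\sum_i\ell_i=L$. Then the entangling rate $R$ of the chain, as a function of $(\ell_1,\dots,\ell_{N+1})$, is maximal when $\ell_i=L/(N+1)$ for all $i$.
   Context: Repeater-chain model (swap-ASAP, synchronized attempts). Edge $j$ connects nodes $j$ and $j+1$ and has length $l_j\ge0$ (km). Entanglement generation proceeds in synchronized rounds of duration $t_{\mathrm{att}}=\frac1c\max_jl_j$ with $c=200{,}000$ km/s. In each round, every edge not yet successful makes an attempt succeeding independently with probability $p_j=10^{-\alpha l_j/10}$, $\alpha=0.2\ \mathrm{km}^{-1}$. So the number of rounds $X_j$ until edge $j$ succeeds is geometric on $\{1,2,\dots\}$ with parameter $p_j$, the $X_j$ are independent, and end-to-end entanglement completes at time $T_{\mathrm{done}}=t_{\mathrm{att}}\max_jX_j$. The entangling rate is $R=1/\mathbb E[T_{\mathrm{done}}]$. *)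

From HB Require Import structures.
From mathcomp Require Import all_boot all_order all_algebra.
From mathcomp Require Import all_classical all_reals all_analysis.
Set Implicit Arguments. Unset Strict Implicit. Unset Printing Implicit Defensive.
Import Order.TTheory GRing.Theory Num.Theory.
Local Open Scope classical_set_scope.
Local Open Scope ring_scope.

Section Defs.
Variable R : realType.

(* attenuation alpha = 0.2 /km, speed of light in fibre c = 200000 km/s *)
Definition alpha : R := 2 / 10.
Definition clight : R := 2 * 10 ^+ 5.

Definition succ_prob (l : R) : R := 10 `^ (- (alpha * l / 10)).

(* P(X = k+1) for X geometric on {1,2,...} with parameter p *)
Definition geom_pmf (p : R) (k : nat) : R := p * (1 - p) ^+ k.

(* duration of one synchronized round *)
Definition t_att n (l : 'I_n -> R) : R := (\big[Num.max/0]_(j < n) l j) / clight.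

(* E[max_j X_j] for independent geometric X_j with parameters succ_prob (l j):
   expectation over the product pmf, indexing X_j = x j + 1. *)
Definition E_max_rounds n (l : 'I_n -> R) : \bar R :=
  (\esum_(x in [set: {ffun 'I_n -> nat}])
     (((\max_(j < n) (x j).+1)%N)%:R * \prod_(j < n) geom_pmf (succ_prob (l j)) (x j))%:E)%E.

Definition E_T_done n (l : 'I_n -> R) : R := t_att l * fine (E_max_rounds l).

Definition rate n (l : 'I_n -> R) : R := (E_T_done l)^-1.

(* edge lengths of the chain: the M-1 fixed edges, then the N+1 variable ones *)
Definition chain_lengths m k (d : 'I_m -> R) (ell : 'I_k -> R) : 'I_(m + k) -> R :=
  fun j => match fintype.split j with inl a => d a | inr b => ell b end.

End Defs.

From HB Require Import structures.
From mathcomp Require Import all_boot all_order all_algebra.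
From mathcomp Require Import all_classical all_reals all_analysis.
From mathcomp Require Import ring lra.
Import Order.TTheory GRing.Theory Num.Theory.
Import numFieldNormedType.Exports.

(* The expected number of rounds is the tail sum
   E[max_j X_j] = \sum_k (1 - \prod_j P(X_j <= k)), so it suffices that equal spacing
   maximises each product \prod_j P(X_j <= k). For an edge of length l this probability is
   1 - (1 - e^(-c l))^k, a log-concave function of l; its tangent bound at the mean length
   L/(N+1) shows that the product over the N+1 variable edges is largest when they are all
   equal. Equal spacing also minimises the longest edge, hence the round duration. *)

Set Implicit Arguments. Unset Strict Implicit. Unset Printing Implicit Defensive.
Local Open Scope classical_set_scope.
Local Open Scope ring_scope.

Section GeometricCdf.
Variable R : realType.

Definition powsum (k : nat) (q : R) : R := \sum_(i < k) q ^+ i.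

Lemma powsum_ge1 k q : (0 < k)%N -> 0 <= q -> 1 <= powsum k q.
Proof.
case: k => // k _ q0; rewrite /powsum big_ord_recl expr0 lerDl.
by apply: sumr_ge0 => i _; apply: exprn_ge0.
Qed.

Lemma subX_powsum k q : 1 - q ^+ k = (1 - q) * powsum k q.
Proof.
rewrite -{1}(expr1n R k) subrXX /powsum; congr (_ * _).
by apply: eq_bigr => i _; rewrite expr1n mul1r.
Qed.

Lemma powsum_cross k u v : 0 <= u -> u <= v ->
  u ^+ k.-1 * powsum k v <= v ^+ k.-1 * powsum k u.
Proof.
move=> u0 uv; rewrite /powsum !mulr_sumr; apply: ler_sum => i _.
have v0 : 0 <= v := le_trans u0 uv.
have -> : k.-1 = (i + (k.-1 - i))%N.
  by rewrite subnKC // -ltnS prednK // (leq_ltn_trans _ (ltn_ord i)).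
rewrite !exprD [leLHS](_ : _ = (u ^+ i * v ^+ i) * u ^+ (k.-1 - i)); last by ring.
rewrite [leRHS](_ : _ = (u ^+ i * v ^+ i) * v ^+ (k.-1 - i)); last by ring.
by rewrite ler_wpM2l ?mulr_ge0 ?exprn_ge0 // lerXn2r // nnegrE.
Qed.

Lemma powsum_le_inv k (q : R) : 0 <= q < 1 -> powsum k q <= (1 - q)^-1.
Proof.
move=> /andP [q0 q1]; have q1' : 0 < 1 - q by rewrite subr_gt0.
by rewrite -(ler_pM2l q1') mulfV ?gt_eqF // -subX_powsum lerBlDr lerDl exprn_ge0.
Qed.

Lemma expr_le_inv k (q : R) : 0 <= q < 1 -> q ^+ k <= (k.+1%:R * (1 - q))^-1.
Proof.
move=> /[dup] /andP [q0 q1] q01.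
have kq : k.+1%:R * q ^+ k <= powsum k.+1 q.
  have -> : k.+1%:R * q ^+ k = \sum_(i < k.+1) q ^+ k.
    by rewrite sumr_const card_ord mulr_natl.
  by apply: ler_sum => i _; apply: ler_wiXn2l; rewrite ?(ltW q1) // -ltnS.
rewrite invfM ler_pdivlMl ?ltr0Sn //.
exact: le_trans kq (powsum_le_inv _ q01).
Qed.

Definition geom_cdf (p : R) (k : nat) : R := 1 - (1 - p) ^+ k.

Lemma sum_geom_pmf p K : \sum_(i < K) geom_pmf p i = geom_cdf p K.
Proof.
by rewrite /geom_cdf subX_powsum /geom_pmf -mulr_sumr /powsum; congr (_ * _); ring.
Qed.

Lemma geom_cdf_ge0 (p : R) k : 0 <= p <= 1 -> 0 <= geom_cdf p k.
Proof.
by move=> /andP [p0 p1]; rewrite subr_ge0 exprn_ile1 ?subr_ge0 // lerBlDr lerDl.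
Qed.

Lemma geom_cdf_le1 (p : R) k : 0 <= p <= 1 -> geom_cdf p k <= 1.
Proof. by move=> /andP [_ p1]; rewrite lerBlDr lerDl exprn_ge0 ?subr_ge0. Qed.

Lemma geom_cdf_mono (p : R) k K : 0 <= p <= 1 -> (k <= K)%N -> geom_cdf p k <= geom_cdf p K.
Proof.
move=> /andP [p0 p1] kK; rewrite lerB // ler_wiXn2l ?subr_ge0 //.
by rewrite lerBlDr lerDl.
Qed.

End GeometricCdf.

Section LogConcavity.
Variable R : realType.

Lemma le_at_derive_sign_change (f df : R -> R) (a s0 : R) :
  (forall x : R, is_derive x 1 f (df x)) ->
  (forall x, a <= x <= s0 -> 0 <= df x) -> (forall x, s0 <= x -> df x <= 0) ->
  forall s, a <= s -> f s <= f s0.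
Proof.
move=> fdf df_ge0 df_le0 s a_s.
have fcont (b c : R) : {within `[b, c], continuous f}.
  apply/continuous_subspaceT => x; apply/differentiable_continuous/derivable1_diffP.
  by apply: ex_derive; exact: fdf.
case: (leP s s0) => [ss0|/ltW s0s].
  have [c] := MVT_segment ss0 (fun x _ => fdf x) (fcont _ _).
  rewrite in_itv /= => /andP [sc cs0] E.
  by rewrite -subr_ge0 E mulr_ge0 ?subr_ge0 // df_ge0 // (le_trans a_s sc).
have [c] := MVT_segment s0s (fun x _ => fdf x) (fcont _ _).
rewrite in_itv /= => /andP [s0c _] E.
by rewrite -subr_le0 E mulr_le0_ge0 ?subr_ge0 // df_le0.
Qed.

Let u (s : R) : R := 1 - expR (- s).

Let u_ge0 s : 0 <= s -> 0 <= u s.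
Proof. by move=> s0; rewrite subr_ge0 expR_le1 oppr_le0. Qed.

Let u_mono : {homo u : a b / a <= b}.
Proof. by move=> a b ab; rewrite lerB // ler_expR lerN2. Qed.

Lemma is_derive_tilted_geom_cdf k kap (x : R) :
  is_derive x 1 (fun s => geom_cdf (expR (- s)) k.+1 * expR (kap * s))
    (expR (kap * x) * expR (- x) * (kap * powsum k.+1 (u x) - k.+1%:R * u x ^+ k)).
Proof.
have dexpN : is_derive x 1 (fun s : R => expR (- s)) (- expR (- x)).
  have := is_derive1_comp (is_derive_expR (- x)) (is_deriveNid x 1).
  by rewrite mulrN1.
have dexpM : is_derive x 1 (fun s : R => expR (kap * s)) (expR (kap * x) * kap).
  have dM : is_derive x 1 (fun s : R => kap * s) kap.
    by have := is_deriveZ kap (is_derive_id x 1); rewrite /GRing.scale /= mulr1.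
  exact: is_derive1_comp (is_derive_expR _) dM.
have du : is_derive x 1 u (expR (- x)).
  by have := is_deriveB (is_derive_cst (1 : R) x 1) dexpN; rewrite sub0r opprK.
have dcdf : is_derive x 1 (fun s => 1 - u s ^+ k.+1)
    (- (k.+1%:R * u x ^+ k * expR (- x))).
  have := is_deriveB (is_derive_cst (1 : R) x 1) (is_deriveX k.+1 du).
  by rewrite sub0r /GRing.scale /= exprfctE.
have := is_deriveM dcdf dexpM; move/is_derive_eq; apply.
have ue : 1 - u x = expR (- x) by rewrite /u; ring.
rewrite /GRing.scale /= subX_powsum ue; ring.
Qed.

(* Log-concavity in tangent form. Taking for [kap] the negated logarithmic derivative at
   [s0], the tilted function [geom_cdf (expR (- s)) k * expR (kap * s)] increases up to [s0]
   and decreases after it, because [u ^+ k.-1 / powsum k u] is nondecreasing in [u]. *)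
Lemma geom_cdf_expN_tangent k (s0 : R) : 0 <= s0 -> exists kap : R, forall s, 0 <= s ->
  geom_cdf (expR (- s)) k <= geom_cdf (expR (- s0)) k * expR (kap * (s0 - s)).
Proof.
move=> s0_ge0.
case: k => [|k]; first by exists 0 => s _; rewrite /geom_cdf !expr0 subrr mul0r.
pose kap := k.+1%:R * u s0 ^+ k / powsum k.+1 (u s0).
have S0 : 0 < powsum k.+1 (u s0) by rewrite (lt_le_trans ltr01) ?powsum_ge1 ?u_ge0.
exists kap => s s_ge0.
rewrite mulrBr expRB mulrA ler_pdivlMr ?expR_gt0 //.
apply: (le_at_derive_sign_change (is_derive_tilted_geom_cdf k kap)) s_ge0 => x.
  move=> /andP [x0 xs0]; rewrite mulr_ge0 ?mulr_ge0 ?expR_ge0 // subr_ge0.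
  rewrite mulrAC ler_pdivlMr // -!mulrA ler_wpM2l //.
  by apply: (powsum_cross k.+1); rewrite ?u_ge0 ?u_mono.
move=> s0x; rewrite mulr_ge0_le0 ?mulr_ge0 ?expR_ge0 // subr_le0.
rewrite mulrAC ler_pdivrMr // -!mulrA ler_wpM2l //.
by apply: (powsum_cross k.+1); rewrite ?u_ge0 ?u_mono.
Qed.

Lemma prod_geom_cdf_expN_le k n (v : 'I_n -> R) (m : R) : (0 < n)%N ->
  (forall i, 0 <= v i) -> \sum_i v i = n%:R * m ->
  \prod_i geom_cdf (expR (- v i)) k <= geom_cdf (expR (- m)) k ^+ n.
Proof.
move=> n0 v0 sv.
have m0 : 0 <= m.
  have : 0 <= n%:R * m by rewrite -sv; apply: sumr_ge0 => i _.
  by rewrite pmulr_rge0 // ltr0n.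
have [kap tangent] := geom_cdf_expN_tangent k m0.
apply: (@le_trans _ _ (\prod_i (geom_cdf (expR (- m)) k * expR (kap * (m - v i))))).
  apply: ler_prod => i _; rewrite tangent ?v0 // andbT geom_cdf_ge0 //.
  by rewrite expR_ge0 expR_le1 oppr_le0 v0.
have sum0 : \sum_i kap * (m - v i) = 0.
  by rewrite -mulr_sumr sumrB sv sumr_const card_ord mulr_natl subrr mulr0.
by rewrite big_split /= prodr_const card_ord -expR_sum sum0 expR0 mulr1.
Qed.

End LogConcavity.

Lemma fsbig_setT (T : finType) (R : Type) (idx : R) (op : Monoid.com_law idx) (F : T -> R) :
  \big[op/idx]_(x \in [set: T]) F x = \big[op/idx]_(x : T) F x.
Proof.
rewrite (fsbigE (enum T)) ?enum_uniq //; last by move=> x _; rewrite mem_enum.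
by rewrite big_enum_cond /=; apply: eq_bigl => x; rewrite in_setT.
Qed.

Section MaxOfGeometrics.
Variable R : realType.

Definition max_cdf n (p : 'I_n -> R) (k : nat) : R := \prod_(j < n) geom_cdf (p j) k.

Definition max_term n (p : 'I_n -> R) (x : {ffun 'I_n -> nat}) : R :=
  (\max_(j < n) (x j).+1)%N%:R * \prod_(j < n) geom_pmf (p j) (x j).

Definition Emax n (p : 'I_n -> R) : \bar R :=
  (\esum_(x in [set: {ffun 'I_n -> nat}]) (max_term p x)%:E)%E.

Lemma E_max_roundsE n (l : 'I_n -> R) : E_max_rounds l = Emax (fun j => succ_prob (l j)).
Proof. by []. Qed.

Definition ffun_val n K (f : {ffun 'I_n -> 'I_K}) : {ffun 'I_n -> nat} :=
  [ffun j => nat_of_ord (f j)].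

Lemma ffun_val_inj n K : injective (@ffun_val n K).
Proof.
move=> f g /ffunP fg; apply/ffunP => j; apply: val_inj.
by have := fg j; rewrite !ffunE.
Qed.

Lemma sum_indicator_ltn (F : nat -> R) m K : (m <= K)%N ->
  \sum_(k < K) ((k < m)%N%:R * F k) = \sum_(k < m) F k.
Proof.
move=> mK; rewrite (big_ord_widen K F mK) [RHS]big_mkcond /=.
by apply: eq_bigr => k _; case: (k < m)%N; rewrite /= ?mul1r ?mul0r.
Qed.

Lemma ltn_bigmax_indicator n (x : 'I_n -> nat) k :
  ((k < \max_(j < n) (x j).+1)%N)%:R = 1 - \prod_(j < n) ((x j < k)%N%:R : R).
Proof.
have [/forallP all_lt|] := boolP [forall j, (x j < k)%N].
  have -> : (k < \max_(j < n) (x j).+1)%N = false.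
    by apply/negbTE; rewrite -leqNgt; apply/bigmax_leqP => j _; apply: all_lt.
  by rewrite big1 ?subrr // => j _; rewrite all_lt.
rewrite negb_forall => /existsP [j xj].
have -> : (k < \max_(j < n) (x j).+1)%N.
  by apply: leq_trans (leq_bigmax j); rewrite ltnS leqNgt.
by rewrite (bigD1 j) //= (negbTE xj) mul0r subr0.
Qed.

(* On the box [x < K], write [max_j (x j).+1] as [\sum_(k < K) [k < max_j (x j).+1]]. *)
Lemma max_term_box n K (p : 'I_n -> R) (f : {ffun 'I_n -> 'I_K}) :
  max_term p (ffun_val f) = \sum_(k < K)
    (\prod_j geom_pmf (p j) (f j) - \prod_j ((f j < k)%N%:R * geom_pmf (p j) (f j))).
Proof.
rewrite /max_term /ffun_val.
under [in X in X%:R]eq_bigr do rewrite ffunE.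
under [in X in _ * X = _]eq_bigr do rewrite ffunE.
have maxK : (\max_(j < n) (f j).+1 <= K)%N by apply/bigmax_leqP => j _.
have -> : (\max_(j < n) (f j).+1)%:R = \sum_(k < K) ((k < \max_(j < n) (f j).+1)%N%:R * 1) :> R.
  by apply/esym/(etrans (sum_indicator_ltn (fun=> 1) maxK)); rewrite sumr_const card_ord.
rewrite mulr_suml; apply: eq_bigr => k _.
by rewrite mulr1 ltn_bigmax_indicator mulrBl mul1r [X in _ = _ - X]big_split.
Qed.

Lemma sum_max_term_box n K (p : 'I_n -> R) :
  \sum_(f : {ffun 'I_n -> 'I_K}) max_term p (ffun_val f) =
  \sum_(k < K) (max_cdf p K - max_cdf p k).
Proof.
under eq_bigr do rewrite max_term_box.
rewrite exchange_big /=; apply: eq_bigr => k _.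
rewrite sumrB -(bigA_distr_bigA (fun j (i : 'I_K) => geom_pmf (p j) i)).
rewrite -(bigA_distr_bigA (fun j (i : 'I_K) => (i < k)%N%:R * geom_pmf (p j) i)).
congr (_ - _); apply: eq_bigr => j _; first exact: sum_geom_pmf.
by rewrite (sum_indicator_ltn (geom_pmf (p j))) ?sum_geom_pmf // ltnW.
Qed.

Lemma max_term_ge0 n (p : 'I_n -> R) x : (forall j, 0 <= p j <= 1) -> 0 <= max_term p x.
Proof.
move=> p01; rewrite mulr_ge0 //; apply: prodr_ge0 => j _.
have /andP [p0 p1] := p01 j.
by rewrite mulr_ge0 // exprn_ge0 // subr_ge0.
Qed.

Lemma Emax_ge_box n (p : 'I_n -> R) K : (forall j, 0 <= p j <= 1) ->
  ((\sum_(k < K) (max_cdf p K - max_cdf p k))%:E <= Emax p)%E.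
Proof.
move=> p01; rewrite -sum_max_term_box; apply: esum_ge.
exists (@ffun_val n K @` setT).
  by split => //; apply/finite_image/finite_finset.
rewrite fsbig_image; last by move=> x y _ _; apply: ffun_val_inj.
by rewrite fsbig_setT sumEFin.
Qed.

(* Every finite set of outcomes lies in some box [x < K]. *)
Lemma Emax_le_of_box n (p : 'I_n -> R) (B : \bar R) : (forall j, 0 <= p j <= 1) ->
  (forall K, ((\sum_(k < K) (max_cdf p K - max_cdf p k))%:E <= B)%E) -> (Emax p <= B)%E.
Proof.
move=> p01 boxB; apply: ge_ereal_sup => _ [X [finX _] <-].
pose K := (\max_(x <- finmap.enum_fset (fset_set X)) \max_(j < n) x j).+1.
apply: le_trans (boxB K); rewrite -sum_max_term_box -sumEFin.
have -> : (\sum_(f : {ffun 'I_n -> 'I_K}) (max_term p (ffun_val f))%:E)%E =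
    (\sum_(x \in @ffun_val n K @` setT) (max_term p x)%:E)%E.
  by rewrite fsbig_image ?fsbig_setT // => x y _ _; apply: ffun_val_inj.
apply: lee_fsum_nneg_subset => //.
- exact/finite_image/finite_finset.
- move=> x; rewrite inE => Xx.
  have xK j : (x j < K)%N.
    rewrite ltnS; apply: leq_trans (leq_bigmax j) _.
    by apply: leq_bigmax_seq => //; rewrite in_fset_set // inE.
  rewrite inE; exists [ffun j => Ordinal (xK j)] => //.
  by apply/ffunP => j; rewrite /ffun_val !ffunE.
- by move=> x _; rewrite lee_fin max_term_ge0.
Qed.

Lemma one_sub_prod_le_sum m (a : 'I_m -> R) : (forall j, 0 <= a j <= 1) ->
  1 - \prod_(j < m) (1 - a j) <= \sum_(j < m) a j.
Proof.
elim: m a => [|m IH] a a01; first by rewrite !big_ord0 subrr.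
rewrite big_ord_recr big_ord_recr /=.
set a' := fun j => a (widen_ord (leqnSn m) j).
have IHa := IH a' (fun j => a01 _).
have a'01 j : 0 <= 1 - a' j <= 1.
  by have /andP [a0 a1] := a01 (widen_ord (leqnSn m) j); rewrite subr_ge0 a1 lerBlDr lerDl.
have P0 : 0 <= \prod_(i < m) (1 - a' i).
  by apply: prodr_ge0 => j _; case/andP: (a'01 j).
have P1 : \prod_(i < m) (1 - a' i) <= 1 by apply: prodr_ile1.
have /andP [am0 am1] := a01 ord_max.
move: IHa P0 P1; rewrite /a'; set P := \prod_(i < m) _; set S := \sum_(i < m) _ => IHa P0 P1.
nra.
Qed.

Section Tails.
Variables (n : nat) (p : 'I_n -> R).
Hypothesis p01 : forall j, 0 < p j <= 1.

Let p01' j : 0 <= p j <= 1.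
Proof. by have /andP [p0 ->] := p01 j; rewrite ltW. Qed.

Let q01 j : 0 <= 1 - p j < 1.
Proof. by have /andP [p0 p1] := p01 j; rewrite subr_ge0 p1 ltrBlDr ltrDl. Qed.

Lemma max_cdf_le1 k : max_cdf p k <= 1.
Proof. by apply: prodr_ile1 => j _; rewrite geom_cdf_ge0 ?geom_cdf_le1. Qed.

Lemma max_cdf_mono k K : (k <= K)%N -> max_cdf p k <= max_cdf p K.
Proof. by move=> kK; apply: ler_prod => j _; rewrite geom_cdf_ge0 ?geom_cdf_mono. Qed.

Lemma one_sub_max_cdf_le k : 1 - max_cdf p k <= \sum_j (1 - p j) ^+ k.
Proof.
rewrite /max_cdf /geom_cdf; apply: one_sub_prod_le_sum => j.
by have /andP [q0 /ltW q1] := q01 j; rewrite exprn_ge0 ?exprn_ile1.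
Qed.

Lemma one_sub_max_cdf_le_div K : 1 - max_cdf p K <= (\sum_j (p j)^-1) / K.+1%:R.
Proof.
apply: le_trans (one_sub_max_cdf_le K) _; rewrite mulr_suml; apply: ler_sum => j _.
have := expr_le_inv K (q01 j); rewrite subKr.
by rewrite invfM mulrC.
Qed.

Lemma sum_one_sub_max_cdf_le K : \sum_(k < K) (1 - max_cdf p k) <= \sum_j (p j)^-1.
Proof.
apply: (@le_trans _ _ (\sum_(k < K) \sum_j (1 - p j) ^+ k)).
  by apply: ler_sum => k _; exact: one_sub_max_cdf_le.
rewrite exchange_big /=; apply: ler_sum => j _.
by have := powsum_le_inv K (q01 j); rewrite subKr.
Qed.

(* [1 - max_cdf p K] decays like [1/K], so a box of side [K >> K'] captures the first
   [K'] tail terms up to [e]. *)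
Lemma sum_one_sub_max_cdf_le_Emax K' :
  ((\sum_(k < K') (1 - max_cdf p k))%:E <= Emax p)%E.
Proof.
set A := \sum_(k < K') _; set C := \sum_j (p j)^-1.
have C0 : 0 <= C.
  by apply: sumr_ge0 => j _; have /andP [p0 _] := p01 j; rewrite invr_ge0 ltW.
apply/lee_addgt0Pr => e e0.
pose K := maxn K' (Num.bound (K'%:R * C / e)).
have K'K : (K' <= K)%N := leq_maxl _ _.
apply: le_trans (leeD2r _ (Emax_ge_box K p01')); rewrite -EFinD lee_fin.
have box_ge : \sum_(k < K') (max_cdf p K - max_cdf p k) <=
    \sum_(k < K) (max_cdf p K - max_cdf p k).
  rewrite (big_ord_widen K (fun k => max_cdf p K - max_cdf p k) K'K).
  rewrite [leRHS](bigID (fun k : 'I_K => (k < K')%N)) /= lerDl.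
  by apply: sumr_ge0 => k _; rewrite subr_ge0 max_cdf_mono // ltnW.
have box_eq : \sum_(k < K') (max_cdf p K - max_cdf p k) = A - K'%:R * (1 - max_cdf p K).
  by rewrite /A !sumrB !sumr_const !card_ord; ring.
have tail_small : K'%:R * (1 - max_cdf p K) <= e.
  apply: le_trans (ler_wpM2l (ler0n _ _) (one_sub_max_cdf_le_div K)) _.
  have : K'%:R * C / e < K.+1%:R.
    apply: lt_le_trans (archi_boundP _) _; first by rewrite divr_ge0 ?mulr_ge0 // ltW.
    by rewrite ler_nat leqW // leq_maxr.
  rewrite ltr_pdivrMr // => KC.
  by rewrite mulrA ler_pdivrMr ?ltr0Sn // [e * _]mulrC ltW.
move: box_ge; rewrite box_eq; lra.
Qed.

Let tail_ge0 k : (0 <= (1 - max_cdf p k)%:E)%E.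
Proof. by rewrite lee_fin subr_ge0 max_cdf_le1. Qed.

Lemma Emax_tail_series : Emax p = (\sum_(k <oo) (1 - max_cdf p k)%:E)%E.
Proof.
apply/eqP; rewrite eq_le; apply/andP; split.
  apply: Emax_le_of_box => // K.
  apply: le_trans (nneseries_lim_ge K (fun k _ _ => tail_ge0 k)).
  rewrite big_mkord sumEFin lee_fin; apply: ler_sum => k _.
  by rewrite lerB ?max_cdf_le1.
apply: lime_le; first exact: is_cvg_nneseries.
by apply: nearW => K; rewrite big_mkord sumEFin sum_one_sub_max_cdf_le_Emax.
Qed.

Lemma Emax_fine_gt0 : (0 < n)%N -> 0 < fine (Emax p).
Proof.
move=> n0.
have Emax_ge1 : (1 <= Emax p)%E.
  rewrite Emax_tail_series; apply: le_trans (nneseries_lim_ge 1 (fun k _ _ => tail_ge0 k)).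
  rewrite big_nat1 lee_fin /max_cdf /geom_cdf.
  by rewrite (bigD1 (Ordinal n0)) //= expr0 subrr mul0r subr0.
have Emax_le : (Emax p <= (\sum_j (p j)^-1)%:E)%E.
  rewrite Emax_tail_series; apply: lime_le; first exact: is_cvg_nneseries.
  by apply: nearW => K; rewrite big_mkord sumEFin lee_fin sum_one_sub_max_cdf_le.
have Emax_fin : Emax p \is a fin_num.
  by rewrite ge0_fin_numE ?(le_trans _ Emax_ge1) // (le_lt_trans Emax_le) ?ltry.
by rewrite -lte_fin fineK // (lt_le_trans _ Emax_ge1) ?lte_fin.
Qed.

End Tails.
End MaxOfGeometrics.

(* As [fine +oo = 0] and [0^-1 = 0], the case [y = +oo] holds since the left side is 0. *)
Lemma inv_mul_fine_le (R : realType) (a b : R) (x y : \bar R) :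
  0 < a <= b -> 0 < fine x -> (x <= y)%E -> (b * fine y)^-1 <= (a * fine x)^-1.
Proof.
move=> /andP [a0 ab] x0 xy.
have b0 : 0 < b := lt_le_trans a0 ab.
case: x x0 xy => [x| |] /=; rewrite ?ltxx // => x0.
case: y => [y| |] /=; rewrite ?lee_fin => // xy.
  have y0 : 0 < y := lt_le_trans x0 xy.
  by rewrite lef_pV2 ?posrE ?mulr_gt0 // ler_pM // ltW.
by rewrite mulr0 invr0 invr_ge0 mulr_ge0 // ltW.
Qed.

Section Chain.
Variable R : realType.

Definition loss_rate : R := alpha R / 10 * ln 10.

Lemma loss_rate_gt0 : 0 < loss_rate.
Proof. by rewrite /loss_rate /alpha mulr_gt0 ?divr_gt0 // ln_gt0 // ltr1n. Qed.

Lemma succ_probE (x : R) : succ_prob x = expR (- (loss_rate * x)).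
Proof.
rewrite /succ_prob /powR (negbTE (_ : (10 : R) != 0)) ?pnatr_eq0 //.
by congr expR; rewrite /loss_rate; ring.
Qed.

Lemma succ_prob_gt0_le1 (x : R) : 0 <= x -> 0 < succ_prob x <= 1.
Proof.
move=> x0; rewrite succ_probE expR_gt0 expR_le1 oppr_le0 mulr_ge0 //.
exact: ltW loss_rate_gt0.
Qed.

Lemma t_att_gt0 n (l : 'I_n -> R) j : 0 < l j -> 0 < t_att l.
Proof.
move=> lj0; rewrite /t_att divr_gt0 ?(lt_le_trans lj0 (le_bigmax _ _ _)) //.
by rewrite /clight mulr_gt0 // exprn_gt0.
Qed.

Lemma chain_lengths_lshift m k (d : 'I_m -> R) (e : 'I_k -> R) i :
  chain_lengths d e (lshift k i) = d i.
Proof. by rewrite /chain_lengths (unsplitK (inl _ i)). Qed.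

Lemma chain_lengths_rshift m k (d : 'I_m -> R) (e : 'I_k -> R) i :
  chain_lengths d e (rshift m i) = e i.
Proof. by rewrite /chain_lengths (unsplitK (inr _ i)). Qed.

Lemma chain_lengths_ge0 m k (d : 'I_m -> R) (e : 'I_k -> R) :
  (forall i, 0 <= d i) -> (forall i, 0 <= e i) -> forall j, 0 <= chain_lengths d e j.
Proof. by move=> d0 e0 j; rewrite /chain_lengths; case: fintype.split. Qed.

Variables (m k : nat) (d : 'I_m -> R) (ell : 'I_k.+1 -> R).
Hypotheses (d_ge0 : forall i, 0 <= d i) (ell_ge0 : forall i, 0 <= ell i).

Let ell_avg : 'I_k.+1 -> R := fun=> (\sum_i ell i) / k.+1%:R.

Let avg_ge0 : 0 <= (\sum_i ell i) / k.+1%:R.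
Proof. by rewrite divr_ge0 ?sumr_ge0. Qed.

Lemma max_cdf_chain_le r :
  max_cdf (fun j => succ_prob (chain_lengths d ell j)) r <=
  max_cdf (fun j => succ_prob (chain_lengths d ell_avg j)) r.
Proof.
have cdf_ge0 (x : R) : 0 <= x -> 0 <= geom_cdf (succ_prob x) r.
  move=> x0; have /andP [p0 p1] := succ_prob_gt0_le1 x0.
  by apply: geom_cdf_ge0; rewrite p1 ltW.
rewrite /max_cdf !big_split_ord /=.
apply: ler_pM.
- by apply: prodr_ge0 => i _; rewrite chain_lengths_lshift cdf_ge0.
- by apply: prodr_ge0 => i _; rewrite chain_lengths_rshift cdf_ge0.
- by apply: ler_prod => i _; rewrite !chain_lengths_lshift cdf_ge0 //= lexx.
under eq_bigr do rewrite chain_lengths_rshift succ_probE.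
under [in X in _ <= X]eq_bigr do rewrite chain_lengths_rshift succ_probE.
rewrite /ell_avg /= prodr_const card_ord.
apply: (prod_geom_cdf_expN_le r (v := fun i => loss_rate * ell i)) => //.
- by move=> i; rewrite mulr_ge0 // ltW // loss_rate_gt0.
- by rewrite -mulr_sumr /ell_avg; field.
Qed.

Lemma Emax_chain_le :
  (Emax (fun j => succ_prob (chain_lengths d ell_avg j)) <=
   Emax (fun j => succ_prob (chain_lengths d ell j)))%E.
Proof.
have chain_p01 (l : 'I_k.+1 -> R) : (forall i, 0 <= l i) ->
    forall j, 0 < succ_prob (chain_lengths d l j) <= 1.
  by move=> l_ge0 j; rewrite succ_prob_gt0_le1 // chain_lengths_ge0.
have p_avg := chain_p01 _ (fun=> avg_ge0); have p_ell := chain_p01 _ ell_ge0.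
rewrite (Emax_tail_series p_avg) (Emax_tail_series p_ell).
apply: lee_nneseries => [r _ _|r _]; first by rewrite lee_fin subr_ge0 (max_cdf_le1 p_avg).
by rewrite lee_fin lerB // max_cdf_chain_le.
Qed.

Lemma t_att_chain_le : t_att (chain_lengths d ell_avg) <= t_att (chain_lengths d ell).
Proof.
set top := \big[Num.max/0]_(i < m + k.+1) chain_lengths d ell i.
have top_ge j : chain_lengths d ell j <= top by apply: le_bigmax.
rewrite /t_att ler_pM2r ?invr_gt0 ?mulr_gt0 ?exprn_gt0 //.
apply: bigmax_le => [|j _].
  exact: le_trans (chain_lengths_ge0 d_ge0 ell_ge0 _) (top_ge (rshift _ ord0)).
rewrite /chain_lengths; case: fintype.split => [a|b].
  by apply: le_trans (top_ge (lshift _ a)); rewrite chain_lengths_lshift.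
rewrite ler_pdivrMr ?ltr0Sn //.
have -> : top * k.+1%:R = \sum_(i < k.+1) top by rewrite sumr_const card_ord mulr_natr.
apply: ler_sum => i _.
by apply: le_trans (top_ge (rshift _ i)); rewrite chain_lengths_rshift.
Qed.

End Chain.

Theorem mainTheorem5 (R : realType) (M N : nat) (hM : (1 <= M)%N)
  (d : 'I_(M - 1) -> R) (hd : forall i, 0 <= d i)
  (L : R) (hL : 0 <= L)
  (ell : 'I_N.+1 -> R) (hell : forall i, 0 <= ell i)
  (hsum : \sum_(i < N.+1) ell i = L) :
  rate (chain_lengths d ell) <=
  rate (chain_lengths d (fun _ : 'I_N.+1 => L / N.+1%:R)).
Proof.
rewrite -hsum; have [sum0|sum_neq0] := eqVneq (\sum_i ell i) 0.
  have ell0 i : ell i = 0 by exact: (psumr_eq0P (fun i _ => hell i) sum0).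
  have ellE : (fun=> 0) = ell by apply: boolp.funext => i; rewrite ell0.
  by rewrite sum0 mul0r ellE.
have avg_gt0 : 0 < (\sum_i ell i) / N.+1%:R.
  by rewrite divr_gt0 ?ltr0Sn // lt_def sum_neq0 sumr_ge0.
have avg_ge0 (i : 'I_N.+1) : 0 <= (fun=> (\sum_i ell i) / N.+1%:R) i :> R by exact: ltW.
rewrite /rate /E_T_done !E_max_roundsE; apply: inv_mul_fine_le.
- rewrite t_att_chain_le // andbT (@t_att_gt0 _ _ _ (rshift _ ord0)) //.
  by rewrite chain_lengths_rshift.
- apply: Emax_fine_gt0; last by rewrite addnS.
  by move=> j; apply: succ_prob_gt0_le1; exact: chain_lengths_ge0 hd avg_ge0 j.
- exact: Emax_chain_le hd hell.
Qed.
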